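(* Let $p\ge1$, let $w(0),\ldots,w(p)$ be positive weights, and let $P_1,\ldots,P_m$ be $p\times p$ orthogonal projectors with ranks $k_1,\ldots,k_m$. For orthogonal projectors $Q_1,Q_2$ with ranks $r_1,r_2$ set $D_w^2(Q_1,Q_2)=\tfrac12\|w(r_1)Q_1-w(r_2)Q_2\|^2$ (Frobenius norm), let $\sigma_w^2(P)=\frac1m\sum_{i=1}^m D_w^2(P_i,P)$, and call an average orthogonal projector (AOP) $P_w$ any $p\times p$ orthogonal projector (of any rank $0,\ldots,p$) minimizing $\sigma_w^2$. Let $\bar P_w=\frac1m\sum_{i=1}^m w(k_i)P_i=\sum_{i=1}^p\lambda_iu_iu_i'$ be an eigendecomposition with $\lambda_1\ge\cdots\ge\lambda_p\ge0$ and orthonormal eigenvectors $u_1,\ldots,u_p$. Then the rank $k$ of the AOP $P_w$ maximizes \[ f_w(k)=w(k)\Big(\sum_{i=1}^k\lambda_i\Big)I(k>0)-\tfrac12 w^2(k)k,\qquad k=0,\ldots,p, \] and \[ P_w=I(k>0)\cdot\sum_{i=1}^k u_iu_i', \] where $u_1,\ldots,u_k$ are the eigenvectors corresponding to the eigenvalues $\lambda_1,\ldots,\lambda_k$.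
   Context: An orthogonal projector is a $p\times p$ real matrix $P$ with $P=P'=P^2$; the zero matrix is allowed and has rank $0$. $I(\cdot)$ denotes the indicator function. *)

From HB Require Import structures.
From mathcomp Require Import all_boot all_order all_algebra.
From mathcomp Require Import reals.
Set Implicit Arguments. Unset Strict Implicit. Unset Printing Implicit Defensive.
Import Order.TTheory GRing.Theory Num.Theory.
Local Open Scope ring_scope.

Section Defs.
Variables (R : realType) (p : nat).

Definition is_oproj (P : 'M[R]_p) : Prop := P^T = P /\ P *m P = P.

Definition frob2 (A : 'M[R]_p) : R := \sum_(i < p) \sum_(j < p) A i j ^+ 2.

Definition Dw2 (w : nat -> R) (Q1 Q2 : 'M[R]_p) : R :=
  2^-1 * frob2 (w (\rank Q1) *: Q1 - w (\rank Q2) *: Q2).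

Definition sigma2 (w : nat -> R) (m : nat) (Ps : 'I_m -> 'M[R]_p) (P : 'M[R]_p) : R :=
  (m%:R)^-1 * \sum_(i < m) Dw2 w (Ps i) P.

Definition is_AOP (w : nat -> R) (m : nat) (Ps : 'I_m -> 'M[R]_p) (P : 'M[R]_p) : Prop :=
  is_oproj P /\ forall Q : 'M[R]_p, is_oproj Q -> sigma2 w Ps P <= sigma2 w Ps Q.

Definition Pbar (w : nat -> R) (m : nat) (Ps : 'I_m -> 'M[R]_p) : 'M[R]_p :=
  (m%:R)^-1 *: \sum_(i < m) w (\rank (Ps i)) *: Ps i.

Definition outer (u : 'M[R]_p) (i : 'I_p) : 'M[R]_p := col i u *m (col i u)^T.

Definition fw (w : nat -> R) (lam : 'I_p -> R) (k : nat) : R :=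
  w k * (\sum_(i < p | (i < k)%N) lam i) * (0 < k)%N%:R - 2^-1 * w k ^+ 2 * k%:R.

End Defs.

(* Up to an additive constant, sigma_w^2(Q) is minus the gain
   w(r) tr(Pbar Q) - w(r)^2 r / 2 of a projector Q of rank r.  By Ky Fan's inequality
   tr(Pbar Q) <= lambda_1 + ... + lambda_r, with equality for the projector onto
   u_1, ..., u_r, so the largest gain at rank r is f_w(r) and an AOP has a rank
   maximizing f_w.  For an AOP P of rank r Ky Fan's inequality is an equality, which
   forces the diagonal of u'Pu to be 1 at the eigenvalues above lambda_r and 0 at those
   below.  Thus u'Pu is the identity on the first block, vanishes on the last one and is
   a projector inside the lambda_r-eigenspace, where a rotation, invisible to Pbar, moves
   it onto the leading coordinates. *)

From HB Require Import structures.
From mathcomp Require Import all_boot all_order all_algebra.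
From mathcomp Require Import reals.
From mathcomp Require Import ring lra.
Import Order.TTheory GRing.Theory Num.Theory.
Local Open Scope ring_scope.

Set Implicit Arguments. Unset Strict Implicit. Unset Printing Implicit Defensive.

Definition orthoproj {R : pzRingType} {n : nat} (A : 'M[R]_n) := A^T = A /\ A *m A = A.

Section OrthonormalFrames.
Variable R : rcfType.

Lemma proj_unit_vector n (Pi : 'M[R]_n) : orthoproj Pi -> Pi != 0 ->
  exists e : 'cV[R]_n, e^T *m e = 1%:M /\ Pi *m e = e.
Proof.
move=> [sPi iPi] /matrix0Pn [i [j Pij]].
pose x := col j Pi; pose s := (x^T *m x) 0 0.
have xx : x^T *m x = s%:M by apply/matrixP => a b; rewrite !ord1 [RHS]mxE mulr1n.
have s_gt0 : 0 < s.
  rewrite /s mxE (bigD1 i) //= ltr_pwDl ?sumr_ge0 // => [|l _]; rewrite !mxE -expr2.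
    by rewrite lt_def sqr_ge0 sqrf_eq0 andbT.
  exact: sqr_ge0.
have Px : Pi *m x = x by rewrite /x !colE mulmxA iPi.
exists ((Num.sqrt s)^-1 *: x); split; last by rewrite -scalemxAr Px.
rewrite [(_ *: x)^T]linearZ /= -scalemxAl -scalemxAr scalerA -invfM -expr2 sqr_sqrtr ?ltW //.
by rewrite xx scale_scalar_mx mulVf ?gt_eqF.
Qed.

Lemma proj_orthofactor n (Pi : 'M[R]_n) : orthoproj Pi ->
  exists k (X : 'M[R]_(n, k)), X^T *m X = 1%:M /\ X *m X^T = Pi.
Proof.
have [N] := ubnP (\rank Pi); elim: N Pi => // N IH Pi rPi [sPi iPi].
have [->|nzPi] := eqVneq Pi 0.
  by exists 0%N, 0; split; [apply/matrixP => -[] | rewrite mul0mx].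
have [e [ee Pe]] := proj_unit_vector (conj sPi iPi) nzPi.
have eP : e^T *m Pi = e^T by rewrite -sPi -trmx_mul Pe.
pose Pi' := Pi - e *m e^T.
have Pi'e : Pi' *m e = 0 by rewrite mulmxBl Pe -mulmxA ee mulmx1 subrr.
have sPi' : Pi'^T = Pi' by rewrite linearB /= trmx_mul trmxK sPi.
have iPi' : Pi' *m Pi' = Pi'.
  rewrite mulmxBl !mulmxBr iPi mulmxA Pe -!mulmxA eP (mulmxA e^T) ee mul1mx.
  by rewrite subrr subr0.
have rPi' : (\rank Pi' < \rank Pi)%N.
  have Pi'E : Pi' = (1%:M - e *m e^T) *m Pi by rewrite mulmxBl mul1mx -mulmxA eP.
  have sPi'Pi : (Pi' <= Pi)%MS by rewrite Pi'E submxMl.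
  rewrite (ltn_leqif (mxrank_leqif_sup sPi'Pi)); apply/negP => /submxP [K PiK].
  have e0 : e = 0 by rewrite -Pe PiK -mulmxA Pi'e mulmx0.
  by move: ee; rewrite e0 mulmx0 => /matrixP /(_ 0 0) /eqP; rewrite !mxE eq_sym oner_eq0.
have [k [X [XX XXt]]] := IH Pi' (leq_trans rPi' rPi) (conj sPi' iPi').
have Xe : X^T *m e = 0.
  have XtPi' : X^T *m Pi' = X^T by rewrite -XXt mulmxA XX mul1mx.
  by rewrite -XtPi' -mulmxA Pi'e mulmx0.
have eX : e^T *m X = 0 by rewrite -(trmxK X) -trmx_mul Xe trmx0.
exists (k + 1)%N, (row_mx X e); split.
  by rewrite tr_row_mx mul_col_row XX Xe eX ee -scalar_mx_block.
by rewrite tr_row_mx mul_row_col XXt subrK.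
Qed.

Lemma mxrank_orthofactor n k (X : 'M[R]_(n, k)) : X^T *m X = 1%:M -> \rank (X *m X^T) = k.
Proof.
move=> XX; apply/eqP; rewrite eqn_leq (leq_trans (mxrankM_maxl _ _) (rank_leq_col _)) /=.
have XXtXX : X^T *m (X *m X^T) *m X = 1%:M by rewrite mulmxA XX mul1mx XX.
rewrite -{1}(mxrank1 R k) -XXtXX.
exact: leq_trans (mxrankM_maxl _ _) (mxrankM_maxr _ _).
Qed.

Lemma mxtrace_proj n (Pi : 'M[R]_n) : orthoproj Pi -> \tr Pi = (\rank Pi)%:R.
Proof.
move=> Piproj; have [k [X [XX <-]]] := proj_orthofactor Piproj.
by rewrite mxrank_orthofactor // mxtrace_mulC XX mxtrace1.
Qed.

(* Y maps the range of E isometrically onto the range of Pi. *)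
Definition partial_isometry n (Y Pi E : 'M[R]_n) :=
  [/\ Y *m Y^T = Pi, Y^T *m Y = E, Pi *m Y = Y & Y *m E = Y].

Lemma partial_isometry_exists n (Pi E : 'M[R]_n) :
  orthoproj Pi -> orthoproj E -> \rank Pi = \rank E -> exists Y, partial_isometry Y Pi E.
Proof.
move=> Piproj Eproj rPiE.
have [k [X [XX XXt]]] := proj_orthofactor Piproj.
have [k' [Z [ZZ ZZt]]] := proj_orthofactor Eproj.
have k'k : k' = k by rewrite -(mxrank_orthofactor ZZ) -(mxrank_orthofactor XX) ZZt XXt.
subst k'; exists (X *m Z^T); split.
- by rewrite trmx_mul trmxK mulmxA -(mulmxA X) ZZ mulmx1.
- by rewrite trmx_mul trmxK mulmxA -(mulmxA Z) XX mulmx1.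
- by rewrite -XXt !mulmxA -(mulmxA X) XX mulmx1.
- by rewrite -ZZt !mulmxA -(mulmxA _ Z^T) ZZ mulmx1.
Qed.

Lemma partial_isometryD n (Y1 Y2 Pi1 Pi2 E1 E2 : 'M[R]_n) :
  partial_isometry Y1 Pi1 E1 -> partial_isometry Y2 Pi2 E2 ->
  Pi1 *m Pi2 = 0 -> E1 *m E2 = 0 ->
  partial_isometry (Y1 + Y2) (Pi1 + Pi2) (E1 + E2).
Proof.
move=> [YY1 YtY1 PiY1 YE1] [YY2 YtY2 PiY2 YE2] Pi12 E12.
have sPi1 : Pi1^T = Pi1 by rewrite -YY1 trmx_mul trmxK.
have sPi2 : Pi2^T = Pi2 by rewrite -YY2 trmx_mul trmxK.
have sE1 : E1^T = E1 by rewrite -YtY1 trmx_mul trmxK.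
have sE2 : E2^T = E2 by rewrite -YtY2 trmx_mul trmxK.
have Pi21 : Pi2 *m Pi1 = 0 by rewrite -sPi1 -sPi2 -trmx_mul Pi12 trmx0.
have E21 : E2 *m E1 = 0 by rewrite -sE1 -sE2 -trmx_mul E12 trmx0.
have Y1tY2 : Y1^T *m Y2 = 0.
  by rewrite -PiY1 -PiY2 trmx_mul sPi1 -mulmxA (mulmxA Pi1) Pi12 mul0mx mulmx0.
have Y2tY1 : Y2^T *m Y1 = 0 by rewrite -(trmxK Y1) -trmx_mul Y1tY2 trmx0.
have Y1Y2t : Y1 *m Y2^T = 0.
  by rewrite -YE1 -YE2 trmx_mul sE2 -mulmxA (mulmxA E1) E12 mul0mx mulmx0.
have Y2Y1t : Y2 *m Y1^T = 0 by rewrite -(trmxK Y2) -trmx_mul Y1Y2t trmx0.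
split; rewrite ?linearD /= !(mulmxDl, mulmxDr).
- by rewrite YY1 YY2 Y1Y2t Y2Y1t addr0 add0r.
- by rewrite YtY1 YtY2 Y1tY2 Y2tY1 addr0 add0r.
- have Pi1Y2 : Pi1 *m Y2 = 0 by rewrite -PiY2 mulmxA Pi12 mul0mx.
  have Pi2Y1 : Pi2 *m Y1 = 0 by rewrite -PiY1 mulmxA Pi21 mul0mx.
  by rewrite PiY1 PiY2 Pi1Y2 Pi2Y1 addr0 add0r.
- have Y1E2 : Y1 *m E2 = 0 by rewrite -YE1 -mulmxA E12 mulmx0.
  have Y2E1 : Y2 *m E1 = 0 by rewrite -YE2 -mulmxA E21 mulmx0.
  by rewrite YE1 YE2 Y1E2 Y2E1 addr0 add0r.
Qed.

Lemma block_isometry_exists n (C Pi E : 'M[R]_n) :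
  orthoproj C -> orthoproj Pi -> orthoproj E -> C *m Pi = Pi -> C *m E = E ->
  \rank Pi = \rank E -> exists Y, partial_isometry Y C C /\ Pi *m Y = Y *m E.
Proof.
move=> [sC iC] [sPi iPi] [sE iE] CPi CE rPiE.
have PiC : Pi *m C = Pi by rewrite -sPi -sC -trmx_mul CPi.
have EC : E *m C = E by rewrite -sE -sC -trmx_mul CE.
have sPi' : (C - Pi)^T = C - Pi by rewrite linearB /= sC sPi.
have sE' : (C - E)^T = C - E by rewrite linearB /= sC sE.
have PiPi' : Pi *m (C - Pi) = 0 by rewrite mulmxBr PiC iPi subrr.
have EE' : E *m (C - E) = 0 by rewrite mulmxBr EC iE subrr.
have Pi'proj : orthoproj (C - Pi).
  by split; rewrite // mulmxBl PiPi' subr0 mulmxBr iC CPi.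
have E'proj : orthoproj (C - E) by split; rewrite // mulmxBl EE' subr0 mulmxBr iC CE.
have rPiE' : \rank (C - Pi) = \rank (C - E).
  apply/eqP; rewrite -(eqr_nat R) -(mxtrace_proj Pi'proj) -(mxtrace_proj E'proj).
  by rewrite !raddfB /= !mxtrace_proj // rPiE.
have [Y1 Y1iso] := partial_isometry_exists (conj sPi iPi) (conj sE iE) rPiE.
have [Y2 Y2iso] := partial_isometry_exists Pi'proj E'proj rPiE'.
have := partial_isometryD Y1iso Y2iso PiPi' EE'; rewrite !(addrC _ (C - _)) !subrK => Yiso.
exists (Y1 + Y2); split => //.
case: Y1iso Y2iso => [_ _ PiY1 Y1E] [_ _ Pi'Y2 Y2E'].
have PiY2 : Pi *m Y2 = 0 by rewrite -Pi'Y2 mulmxA PiPi' mul0mx.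
have Y2E : Y2 *m E = 0 by rewrite -Y2E' -mulmxA mulmxBl CE iE subrr mulmx0.
by rewrite mulmxDr mulmxDl PiY1 Y1E PiY2 Y2E.
Qed.

Lemma orthogonal_completion n (C Y : 'M[R]_n) : orthoproj C -> partial_isometry Y C C ->
  (1%:M - C + Y)^T *m (1%:M - C + Y) = 1%:M.
Proof.
move=> [sC iC] [_ YtY CY _].
have sC' : (1%:M - C)^T = 1%:M - C by rewrite linearB /= trmx1 sC.
have C'Y : (1%:M - C) *m Y = 0 by rewrite mulmxBl mul1mx CY subrr.
have YtC' : Y^T *m (1%:M - C) = 0 by rewrite -sC' -trmx_mul C'Y trmx0.
rewrite [(_ + Y)^T]linearD /= sC' mulmxDl [(1%:M - C) *m _]mulmxDr [Y^T *m _]mulmxDr.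
by rewrite C'Y YtC' YtY mulmxBl mul1mx mulmxBr mulmx1 iC subrr subr0 addr0 add0r subrK.
Qed.

Lemma scalar_block_commute n (D C Y : 'M[R]_n) (c : R) :
  D *m C = c *: C -> C *m D = c *: C -> C *m Y = Y -> Y *m C = Y ->
  D *m (1%:M - C + Y) = (1%:M - C + Y) *m D.
Proof.
move=> DC CD CY YC.
have DY : D *m Y = c *: Y by rewrite -CY mulmxA DC -scalemxAl.
have YD : Y *m D = c *: Y by rewrite -YC -mulmxA CD -scalemxAr.
by rewrite mulmxDr mulmxDl DY YD mulmxBr mulmx1 mulmxBl mul1mx DC CD.
Qed.

(* W is the identity off the c-eigenspace C of D and, inside C, a rotation taking the
   range of E onto that of M - Ea. *)
Lemma commuting_frame_exists n (D M C Ea E : 'M[R]_n) (c : R) :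
  orthoproj M -> orthoproj C -> orthoproj Ea -> orthoproj E ->
  C *m Ea = 0 -> C *m E = E -> (1%:M - C) *m M = Ea ->
  D *m C = c *: C -> C *m D = c *: C -> \tr M = \tr (Ea + E) ->
  exists W, [/\ W^T *m W = 1%:M, D *m W = W *m D & M *m W = W *m (Ea + E)].
Proof.
move=> [sM iM] Cproj [sEa iEa] Eproj CEa CE C'M DC CD trM.
have [sC _] := Cproj.
have EaM : Ea *m M = Ea by rewrite -{1}C'M -mulmxA iM.
have MEa : M *m Ea = Ea by rewrite -sM -sEa -trmx_mul EaM.
have CM : C *m M = M - Ea by rewrite -C'M mulmxBl mul1mx opprB addrC subrK.
have MC : M *m C = M - Ea by rewrite -sM -sC -trmx_mul CM linearB /= sEa.
have Qproj : orthoproj (M - Ea).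
  split; first by rewrite linearB /= sM sEa.
  by rewrite mulmxBl !mulmxBr iM MEa EaM iEa subrr subr0.
have CQ : C *m (M - Ea) = M - Ea by rewrite mulmxBr CM CEa subr0.
have rQ : \rank (M - Ea) = \rank E.
  apply/eqP; rewrite -(eqr_nat R) -(mxtrace_proj Qproj) -(mxtrace_proj Eproj).
  by rewrite raddfB /= trM raddfD /= addrC addKr.
have [Y [Yiso QY]] := block_isometry_exists Cproj Qproj Eproj CQ CE rQ.
have [_ _ CY YC] := Yiso.
exists (1%:M - C + Y); split.
- exact: orthogonal_completion.
- exact: scalar_block_commute DC CD CY YC.
have MY : M *m Y = Y *m E by rewrite -QY -{1}CY mulmxA MC.
have YEa : Y *m Ea = 0 by rewrite -YC -mulmxA CEa mulmx0.
rewrite mulmxDr mulmxBr mulmx1 MC MY opprB [M + _]addrC subrK.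
by rewrite mulmxDl !mulmxDr !mulmxBl !mul1mx CEa CE YEa subr0 subrr addr0 add0r.
Qed.

End OrthonormalFrames.

Section CoordinateProjectors.
Context {R : comPzRingType} {n : nat}.
Implicit Types (S T : pred 'I_n) (d : 'rV[R]_n).

Definition coord_proj S : 'M[R]_n := diag_mx (\row_i (S i)%:R).

Lemma coord_projE S i j : coord_proj S i j = (S i && (i == j))%:R.
Proof. by rewrite !mxE; case: (S i); case: (i == j). Qed.

Lemma eq_coord_proj S T : S =1 T -> coord_proj S = coord_proj T.
Proof. by move=> eqST; apply/matrixP => i j; rewrite !coord_projE eqST. Qed.

Lemma coord_projM S T : coord_proj S *m coord_proj T = coord_proj (predI S T).
Proof.
by rewrite mulmx_diag; congr diag_mx; apply/rowP => i; rewrite !mxE -natrM mulnb.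
Qed.

Lemma coord_proj_orthoproj S : orthoproj (coord_proj S).
Proof.
split; first exact: tr_diag_mx.
by rewrite coord_projM; apply: eq_coord_proj => i /=; rewrite andbb.
Qed.

Lemma coord_proj0 S : S =1 pred0 -> coord_proj S = 0.
Proof. by move=> S0; apply/matrixP => i j; rewrite coord_projE S0 mxE. Qed.

Lemma coord_projD S T : (forall i, ~~ (S i && T i)) ->
  coord_proj S + coord_proj T = coord_proj (predU S T).
Proof.
move=> STd; apply/matrixP => i j; rewrite [LHS]mxE !coord_projE /=.
by move: (STd i); case: (S i); case: (T i); case: (i == j); rewrite //= ?addr0 ?add0r.
Qed.

Lemma coord_projC S : 1%:M - coord_proj S = coord_proj (predC S).
Proof.
apply/matrixP => i j; rewrite !mxE /=.
by case: (S i); case: (i == j); rewrite /= ?mulr1n ?mulr0n ?subrr ?subr0.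
Qed.

Lemma coord_proj_mulmxE S m (A : 'M[R]_(n, m)) i j :
  (coord_proj S *m A) i j = (S i)%:R * A i j.
Proof. by rewrite mul_diag_mx !mxE. Qed.

Lemma coord_proj_pid k : pid_mx k = coord_proj (fun i => (i < k)%N).
Proof. by apply/matrixP => i j; rewrite coord_projE mxE andbC. Qed.

Lemma sum_ltn_ind k : (k <= n)%N -> \sum_(i < n) ((i < k)%N%:R : R) = k%:R.
Proof.
move=> kn; rewrite (eq_bigr (fun i : 'I_n => if (i < k)%N then 1 else 0)); last first.
  by move=> i _; case: ifP.
by rewrite -big_mkcond (big_ord_narrow kn) sumr_const card_ord.
Qed.

Lemma mxtrace_pid k : (k <= n)%N -> \tr (pid_mx k : 'M[R]_n) = k%:R.
Proof.
move=> kn; rewrite -(sum_ltn_ind kn); apply: eq_bigr => i _.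
by rewrite mxE eqxx.
Qed.

Lemma mul_diag_coord_proj d c S : (forall i, S i -> d 0 i = c) ->
  diag_mx d *m coord_proj S = c *: coord_proj S.
Proof.
move=> dS; apply/matrixP => i j; rewrite mul_diag_mx [LHS]mxE [RHS]mxE !coord_projE.
by case: (boolP (S i)) => [/dS ->|]; rewrite ?mulr0.
Qed.

End CoordinateProjectors.

Section ProjectorEntries.
Variables (R : realDomainType) (n : nat) (M : 'M[R]_n).
Hypothesis Mproj : orthoproj M.

Lemma proj_diag_sum i : M i i = \sum_j M i j ^+ 2.
Proof.
have [sM iM] := Mproj.
by rewrite -{1}iM mxE; apply: eq_bigr => j _; rewrite -{2}sM mxE expr2.
Qed.

Lemma proj_diag_ge0 i : 0 <= M i i.
Proof. by rewrite proj_diag_sum sumr_ge0 // => j _; exact: sqr_ge0. Qed.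

Lemma proj_diag_le1 i : M i i <= 1.
Proof.
have : M i i ^+ 2 <= M i i.
  by rewrite [leRHS]proj_diag_sum (bigD1 i) //= lerDl sumr_ge0 // => j _; exact: sqr_ge0.
have := proj_diag_ge0 i; rewrite expr2; nra.
Qed.

Lemma proj_row_diag1 i j : M i i = 1 -> M i j = (i == j)%:R.
Proof.
move=> Mii1; have := proj_diag_sum i; rewrite Mii1 (bigD1 i) //= Mii1 expr1n.
rewrite -[X in X = _]addr0 => /addrI /esym offdiag0.
have [<-|ij] := eqVneq i j; first by rewrite Mii1.
have := psumr_eq0P (fun k _ => sqr_ge0 (M i k)) offdiag0 (i := j).
by rewrite eq_sym ij => /(_ isT) /eqP; rewrite sqrf_eq0 => /eqP.
Qed.

Lemma proj_row_diag0 i j : M i i = 0 -> M i j = 0.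
Proof.
move=> Mii0; have rowi0 := proj_diag_sum i; rewrite Mii0 in rowi0.
have := psumr_eq0P (fun k _ => sqr_ge0 (M i k)) (esym rowi0) (i := j) isT.
by move=> /eqP; rewrite sqrf_eq0 => /eqP.
Qed.

End ProjectorEntries.

Section KyFan.
Variables (R : realDomainType) (p : nat) (lam q : 'I_p -> R).
Hypotheses (lam_sorted : forall i j : 'I_p, (i <= j)%N -> lam j <= lam i)
  (q_ge0 : forall i, 0 <= q i) (q_le1 : forall i, q i <= 1).

Lemma sorted_lt_ltn (i j : 'I_p) : lam j < lam i -> (i < j)%N.
Proof. by rewrite ltnNge; apply: contraTN => /lam_sorted; rewrite leNgt. Qed.

Lemma big_ltn_ind r (F : 'I_p -> R) :
  \sum_(i < p | (i < r)%N) F i = \sum_(i < p) F i * (i < r)%N%:R.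
Proof.
by rewrite big_mkcond; apply: eq_bigr => i _; case: ltnP; rewrite ?mulr1 ?mulr0.
Qed.

(* Subtracting c * (sum_i q i - j.+1) = 0 turns the gap into a sum of terms that are all
   nonpositive when c = lam j (kyfan_term_le0). *)
Lemma kyfan_gap (j : 'I_p) (c : R) : \sum_(i < p) q i = j.+1%:R ->
  \sum_(i < p) lam i * q i - \sum_(i < p | (i < j.+1)%N) lam i =
  \sum_(i < p) (lam i - c) * (q i - (i < j.+1)%N%:R).
Proof.
move=> sum_q; have c_term : \sum_(i < p) c * (q i - (i < j.+1)%N%:R) = 0.
  by rewrite -mulr_sumr sumrB sum_q sum_ltn_ind // subrr mulr0.
rewrite [RHS](eq_bigr (fun i => lam i * q i - lam i * (i < j.+1)%N%:R
                                - c * (q i - (i < j.+1)%N%:R))); last first.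
  by move=> i _; move: (lam i) (q i) ((i < j.+1)%N%:R : R) => x y b; ring.
by rewrite sumrB c_term subr0 sumrB big_ltn_ind.
Qed.

Lemma kyfan_term_le0 (j i : 'I_p) : (lam i - lam j) * (q i - (i < j.+1)%N%:R) <= 0.
Proof.
case: (ltnP i j.+1) => ij.
  by apply: mulr_ge0_le0; rewrite ?subr_ge0 ?subr_le0 ?q_le1 // lam_sorted.
apply: mulr_le0_ge0; first by rewrite subr_le0 lam_sorted // ltnW.
by rewrite subr0 q_ge0.
Qed.

Lemma kyfan_le r : (r <= p)%N -> \sum_(i < p) q i = r%:R ->
  \sum_(i < p) lam i * q i <= \sum_(i < p | (i < r)%N) lam i.
Proof.
case: r => [_ sum_q0 | r rp sum_q].
  have q0 i : q i = 0 by apply: (psumr_eq0P (fun i _ => q_ge0 i) sum_q0).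
  by rewrite !big1 // => i; rewrite ?q0 ?mulr0.
rewrite -subr_le0 (@kyfan_gap (Ordinal rp) (lam (Ordinal rp)) sum_q).
by apply: sumr_le0 => i _; exact: kyfan_term_le0.
Qed.

Lemma kyfan_eq (j : 'I_p) : \sum_(i < p) q i = j.+1%:R ->
  \sum_(i < p) lam i * q i = \sum_(i < p | (i < j.+1)%N) lam i ->
  (forall i, lam j < lam i -> q i = 1) /\ (forall i, lam i < lam j -> q i = 0).
Proof.
move=> sum_q /eqP; rewrite -subr_eq0 (@kyfan_gap j (lam j) sum_q) => /eqP gap0.
have term0 i : (lam i - lam j) * (q i - (i < j.+1)%N%:R) = 0.
  apply/eqP; rewrite -oppr_eq0; apply/eqP; move: i (isT : predT i); apply: psumr_eq0P.
    by move=> i _; rewrite oppr_ge0 kyfan_term_le0.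
  by rewrite sumrN gap0 oppr0.
split=> i lt_ij; have /eqP := term0 i; rewrite mulf_eq0 subr_eq0.
  case/orP=> [/eqP eq_ij|]; first by move: lt_ij; rewrite eq_ij ltxx.
  by rewrite ltnS (ltnW (sorted_lt_ltn lt_ij)) subr_eq0 => /eqP.
case/orP=> [/eqP eq_ij|]; first by move: lt_ij; rewrite eq_ij ltxx.
by rewrite ltnNge (sorted_lt_ltn lt_ij) subr0 => /eqP.
Qed.

End KyFan.

Section SortedSpectrum.
Variables (R : rcfType) (p : nat) (lam : 'I_p -> R) (u : 'M[R]_p).
Hypotheses (u_orth : u^T *m u = 1%:M)
  (lam_sorted : forall i j : 'I_p, (i <= j)%N -> lam j <= lam i).

Local Notation D := (diag_mx (\row_i lam i)).

Lemma threshold_proj_frame (M : 'M[R]_p) (j : 'I_p) : orthoproj M -> \tr M = j.+1%:R ->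
  (forall i, lam j < lam i -> M i i = 1) -> (forall i, lam i < lam j -> M i i = 0) ->
  exists W, [/\ W^T *m W = 1%:M, D *m W = W *m D & M *m W = W *m pid_mx j.+1].
Proof.
move=> Mproj trM M1 M0.
set C : 'M[R]_p := coord_proj (fun i => lam i == lam j).
set Ea : 'M[R]_p := coord_proj (fun i => lam j < lam i).
set E : 'M[R]_p := coord_proj (fun i => (i < j.+1)%N && (lam i == lam j)).
have pidE : pid_mx j.+1 = Ea + E.
  rewrite coord_proj_pid coord_projD => [|i]; last first.
    by case: (eqVneq (lam i) (lam j)) => [->|_]; rewrite ?ltxx ?andbF.
  apply: eq_coord_proj => i /=; case: (ltgtP (lam i) (lam j)) => [lt_ij|lt_ji|_].
  - by rewrite andbF ltnNge (sorted_lt_ltn lam_sorted lt_ij).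
  - by rewrite ltnS (ltnW (sorted_lt_ltn lam_sorted lt_ji)).
  - by rewrite andbT.
have C'M : (1%:M - C) *m M = Ea.
  apply/matrixP => i k; rewrite coord_projC coord_proj_mulmxE coord_projE /=.
  case: (ltgtP (lam i) (lam j)) => [lt_ij|lt_ji|_]; rewrite ?mul0r //.
  - by rewrite (proj_row_diag0 Mproj k (M0 _ lt_ij)) mulr0.
  - by rewrite (proj_row_diag1 Mproj k (M1 _ lt_ji)) mul1r.
have CEa : C *m Ea = 0.
  by rewrite coord_projM coord_proj0 // => i /=; case: eqP => // ->; rewrite ltxx.
have CE : C *m E = E.
  by rewrite coord_projM; apply: eq_coord_proj => i /=; case: eqP; rewrite ?andbF ?andbT.
have DC : D *m C = lam j *: C by apply: mul_diag_coord_proj => i /eqP; rewrite mxE.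
have CD : C *m D = lam j *: C by rewrite -DC /C /coord_proj diag_mxC.
have trEaE : \tr M = \tr (Ea + E).
  by rewrite -pidE trM mxtrace_pid ?ltn_ord.
have := commuting_frame_exists Mproj (coord_proj_orthoproj _) (coord_proj_orthoproj _)
  (coord_proj_orthoproj _) CEa CE C'M DC CD trEaE.
by rewrite -pidE.
Qed.

Lemma orthoproj_conj (Q : 'M[R]_p) : orthoproj Q ->
  orthoproj (u^T *m Q *m u) /\ \tr (u^T *m Q *m u) = (\rank Q)%:R.
Proof.
move=> Qproj; have [sQ iQ] := Qproj; have uuT := mulmx1C u_orth; split.
  split; first by rewrite !trmx_mul trmxK sQ mulmxA.
  by rewrite !mulmxA -(mulmxA _ u) uuT mulmx1 -(mulmxA u^T Q Q) iQ.
by rewrite mxtrace_mulC mulmxA uuT mul1mx mxtrace_proj.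
Qed.

Lemma mxtrace_conj_diag (Q : 'M[R]_p) :
  \tr (u *m D *m u^T *m Q) = \sum_(i < p) lam i * (u^T *m Q *m u) i i.
Proof.
rewrite -!mulmxA mxtrace_mulC -!mulmxA; apply: eq_bigr => i _.
by rewrite mul_diag_mx [LHS]mxE mxE !mulmxA.
Qed.

Lemma kyfan_trace (Q : 'M[R]_p) : orthoproj Q ->
  \tr (u *m D *m u^T *m Q) <= \sum_(i < p | (i < \rank Q)%N) lam i.
Proof.
move=> /orthoproj_conj [Mproj trM]; rewrite mxtrace_conj_diag.
apply: (kyfan_le lam_sorted (proj_diag_ge0 Mproj) (proj_diag_le1 Mproj) (rank_leq_row _)).
exact: trM.
Qed.

Lemma top_eigenproj k : (k <= p)%N ->
  [/\ orthoproj (u *m pid_mx k *m u^T), \rank (u *m pid_mx k *m u^T) = k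
     & \tr (u *m D *m u^T *m (u *m pid_mx k *m u^T)) = \sum_(i < p | (i < k)%N) lam i].
Proof.
move=> kp; have conj_pid : u^T *m (u *m pid_mx k *m u^T) *m u = pid_mx k.
  by rewrite !mulmxA u_orth mul1mx -mulmxA u_orth mulmx1.
have Qproj : orthoproj (u *m pid_mx k *m u^T).
  split; first by rewrite !trmx_mul trmxK tr_pid_mx mulmxA.
  rewrite !mulmxA -(mulmxA _ u^T) u_orth mulmx1.
  by rewrite -(mulmxA u (pid_mx k) (pid_mx k)) pid_mx_id.
split=> //.
  have [_] := orthoproj_conj Qproj; rewrite conj_pid mxtrace_pid //.
  by move/eqP; rewrite eqr_nat => /eqP.
rewrite mxtrace_conj_diag conj_pid big_ltn_ind; apply: eq_bigr => i _.
by rewrite mxE eqxx.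
Qed.

Lemma kyfan_trace_eq (Q : 'M[R]_p) : orthoproj Q ->
  \tr (u *m D *m u^T *m Q) = \sum_(i < p | (i < \rank Q)%N) lam i ->
  exists v, [/\ v^T *m v = 1%:M, u *m D *m u^T = v *m D *m v^T
               & Q = v *m pid_mx (\rank Q) *m v^T].
Proof.
move=> Qproj trQ; have [Mproj trM] := orthoproj_conj Qproj.
have uuT := mulmx1C u_orth.
have QE : Q = u *m (u^T *m Q *m u) *m u^T.
  by rewrite !mulmxA uuT mul1mx -mulmxA uuT mulmx1.
case rQ: (\rank Q) => [|r].
  exists u; split=> //; rewrite pid_mx_0 mulmx0 mul0mx.
  by apply/eqP; rewrite -mxrank_eq0 rQ.
have rp : (r < p)%N by rewrite -rQ rank_leq_row.
rewrite rQ in trM trQ; rewrite mxtrace_conj_diag in trQ.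
have [diag1 diag0] := kyfan_eq lam_sorted (proj_diag_ge0 Mproj) (proj_diag_le1 Mproj)
  (j := Ordinal rp) trM trQ.
have [W [WW DW MW]] := threshold_proj_frame (j := Ordinal rp) Mproj trM diag1 diag0.
have WWt := mulmx1C WW.
exists (u *m W); split.
- by rewrite trmx_mul mulmxA -(mulmxA _ u^T) u_orth mulmx1 WW.
- by rewrite trmx_mul !mulmxA -(mulmxA u W) -DW mulmxA -(mulmxA _ W) WWt mulmx1.
- rewrite {1}QE -[u^T *m Q *m u]mulmx1 -WWt (mulmxA (u^T *m Q *m u)) MW.
  by rewrite trmx_mul !mulmxA.
Qed.

End SortedSpectrum.

Section AverageOrthogonalProjector.
Variables (R : realType) (p : nat) (w : nat -> R) (m : nat) (Ps : 'I_m -> 'M[R]_p).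
Hypotheses (hm : (0 < m)%N) (hPs : forall i, is_oproj (Ps i)).

Lemma frob2_mxtrace (A : 'M[R]_p) : frob2 A = \tr (A *m A^T).
Proof. by apply: eq_bigr => i _; rewrite mxE; apply: eq_bigr => j _; rewrite !mxE expr2. Qed.

Lemma Dw2E (Q1 Q2 : 'M[R]_p) : is_oproj Q1 -> is_oproj Q2 ->
  Dw2 w Q1 Q2 = 2^-1 * (w (\rank Q1) ^+ 2 * (\rank Q1)%:R + w (\rank Q2) ^+ 2 * (\rank Q2)%:R)
                - w (\rank Q1) * w (\rank Q2) * \tr (Q1 *m Q2).
Proof.
move=> [sQ1 iQ1] [sQ2 iQ2].
rewrite /Dw2 frob2_mxtrace [(_ - _)^T]linearB /= ![(_ *: _)^T]linearZ /= sQ1 sQ2.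
rewrite mulmxBl !mulmxBr -!scalemxAl -!scalemxAr !scalerA iQ1 iQ2 !raddfB /= !mxtraceZ.
rewrite (mxtrace_mulC Q2) (mxtrace_proj (conj sQ1 iQ1)) (mxtrace_proj (conj sQ2 iQ2)).
by move: (\tr _) => t; field.
Qed.

Definition aop_gain (Q : 'M[R]_p) : R :=
  w (\rank Q) * \tr (Pbar w Ps *m Q) - 2^-1 * w (\rank Q) ^+ 2 * (\rank Q)%:R.

Lemma sigma2_gain : exists c, forall Q, is_oproj Q -> sigma2 w Ps Q = c - aop_gain Q.
Proof.
pose c i := 2^-1 * (w (\rank (Ps i)) ^+ 2 * (\rank (Ps i))%:R).
exists ((m%:R)^-1 * \sum_(i < m) c i) => Q Qproj.
pose g := 2^-1 * w (\rank Q) ^+ 2 * (\rank Q)%:R.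
pose t i := w (\rank (Ps i)) * \tr (Ps i *m Q).
have Dw2_split i : Dw2 w (Ps i) Q = c i + (g - w (\rank Q) * t i).
  by rewrite Dw2E // /c /g /t; move: (\tr _) => tr; field.
have trPbar : \tr (Pbar w Ps *m Q) = (m%:R)^-1 * \sum_(i < m) t i.
  rewrite /Pbar -scalemxAl mxtraceZ mulmx_suml raddf_sum /=; congr (_ * _).
  by apply: eq_bigr => i _; rewrite -scalemxAl mxtraceZ.
rewrite /sigma2 /aop_gain trPbar (eq_bigr _ (fun i _ => Dw2_split i)) big_split /=.
rewrite sumrB sumr_const card_ord -(mulr_sumr _ _ _ (w (\rank Q))) -[g *+ m]mulr_natr.
have m0 : m%:R != 0 :> R by rewrite pnatr_eq0 -lt0n.
by rewrite /g; field.
Qed.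

Lemma is_AOP_gain P Q : is_AOP w Ps P -> is_oproj Q -> aop_gain Q <= aop_gain P.
Proof.
case=> Pproj Pmin Qproj; have [c sigma2E] := sigma2_gain; have := Pmin Q Qproj.
by rewrite !sigma2E // lerD2l lerN2.
Qed.

Lemma sum_outerE (v : 'M[R]_p) (c : 'I_p -> R) :
  \sum_(i < p) c i *: outer v i = v *m diag_mx (\row_i c i) *m v^T.
Proof.
apply/matrixP => a b; rewrite summxE !mxE; apply: eq_bigr => i _.
by rewrite mul_mx_diag !mxE big_ord1 !mxE mulrCA mulrA.
Qed.

Lemma sum_outer_pid (v : 'M[R]_p) r :
  (0 < r)%N%:R *: \sum_(i < p | (i < r)%N) outer v i = v *m pid_mx r *m v^T.
Proof.
case: r => [|r]; first by rewrite scale0r pid_mx_0 mulmx0 mul0mx.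
rewrite scale1r coord_proj_pid /coord_proj -sum_outerE big_mkcond /=.
by apply: eq_bigr => i _; case: ifP; rewrite ?scale1r ?scale0r.
Qed.

Variables (u : 'M[R]_p) (lam : 'I_p -> R).
Hypotheses (hw : forall k, (k <= p)%N -> 0 < w k) (hu : u^T *m u = 1%:M)
  (lam_sorted : forall i j : 'I_p, (i <= j)%N -> lam j <= lam i)
  (hdecomp : Pbar w Ps = \sum_(i < p) lam i *: outer u i).

Lemma Pbar_diag : Pbar w Ps = u *m diag_mx (\row_i lam i) *m u^T.
Proof. by rewrite hdecomp sum_outerE. Qed.

Lemma fwE k : fw w lam k = w k * \sum_(i < p | (i < k)%N) lam i - 2^-1 * w k ^+ 2 * k%:R.
Proof.
case: k => [|k]; rewrite /fw; last by rewrite mulr1.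
by rewrite mulr0 big_pred0 ?mulr0 // => i; rewrite ltn0.
Qed.

Lemma aop_gain_le_fw Q : is_oproj Q -> aop_gain Q <= fw w lam (\rank Q).
Proof.
move=> Qproj; rewrite fwE /aop_gain lerD2r ler_pM2l ?hw ?rank_leq_row // Pbar_diag.
apply: (kyfan_trace hu lam_sorted); exact: Qproj.
Qed.

Lemma aop_gain_top k : (k <= p)%N ->
  is_oproj (u *m pid_mx k *m u^T) /\ aop_gain (u *m pid_mx k *m u^T) = fw w lam k.
Proof.
move=> kp; have [Qproj rQ trQ] := top_eigenproj lam hu kp.
by split=> //; rewrite /aop_gain fwE rQ Pbar_diag trQ.
Qed.

Lemma AOP_trace P : is_AOP w Ps P ->
  \tr (Pbar w Ps *m P) = \sum_(i < p | (i < \rank P)%N) lam i.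
Proof.
move=> AOP_P; apply/le_anti/andP; split.
  rewrite Pbar_diag; apply: (kyfan_trace hu lam_sorted); exact: AOP_P.1.
have [Qproj gainQ] := aop_gain_top (rank_leq_row P).
have := is_AOP_gain AOP_P Qproj; rewrite gainQ fwE /aop_gain lerD2r.
by rewrite ler_pM2l ?hw ?rank_leq_row.
Qed.

End AverageOrthogonalProjector.

Theorem proposition2p2 (R : realType) (p : nat) (hp : (0 < p)%N)
  (w : nat -> R) (hw : forall k : nat, (k <= p)%N -> 0 < w k)
  (m : nat) (hm : (0 < m)%N) (Ps : 'I_m -> 'M[R]_p)
  (hPs : forall i : 'I_m, is_oproj (Ps i))
  (u : 'M[R]_p) (lam : 'I_p -> R)
  (hu : u^T *m u = 1%:M)
  (hlam_sorted : forall i j : 'I_p, (i <= j)%N -> lam j <= lam i)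
  (hlam_nonneg : forall i : 'I_p, 0 <= lam i)
  (hdecomp : Pbar w Ps = \sum_(i < p) lam i *: outer u i)
  (P : 'M[R]_p) (hP : is_AOP w Ps P) :
  (forall k : nat, (k <= p)%N -> fw w lam k <= fw w lam (\rank P))
  /\ exists v : 'M[R]_p,
       [/\ v^T *m v = 1%:M,
           Pbar w Ps = \sum_(i < p) lam i *: outer v i
         & P = (0 < \rank P)%N%:R *: \sum_(i < p | (i < \rank P)%N) outer v i].
Proof.
have [Pproj _] := hP.
split=> [k kp|].
  have [Qproj <-] := aop_gain_top hu hdecomp kp.
  exact: le_trans (is_AOP_gain hm hPs hP Qproj)
                  (aop_gain_le_fw hw hu hlam_sorted hdecomp Pproj).
have trP := AOP_trace hm hPs hw hu hlam_sorted hdecomp hP.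
rewrite (Pbar_diag hdecomp) in trP.
have [v [vv Pbar_v P_v]] := kyfan_trace_eq hu hlam_sorted Pproj trP.
exists v; split=> //; first by rewrite sum_outerE -Pbar_v -(Pbar_diag hdecomp).
by rewrite sum_outer_pid.
Qed.
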